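(* Fix positive integers $m$ and $\ell$. A rational number $\beta$ is of the form $\gamma^{\ell}$ for some $\gamma\in\mathbb{Q}(\zeta_{m\ell})$ if and only if one of the following sets of conditions is satisfied: (i) $\ell\equiv 1\pmod{2}$ and $\beta=c^{\ell}$ for some $c\in\mathbb{Q}$; (ii) $\ell\equiv 0\pmod{2}$, $\beta>0$, and $\beta=c^{\ell/2}$ for some $c\in\mathbb{Q}$ with $\sqrt{c}\in\mathbb{Q}(\zeta_{m\ell})$; (iii) $\ell\equiv 0\pmod{2}$, $\beta<0$, $2\mid m$, and $\beta=-c^{\ell/2}$ for some $c\in\mathbb{Q}$ with $\sqrt{c}\in\mathbb{Q}(\zeta_{m\ell})$; (iv) $\ell\equiv 2\pmod{4}$, $\beta<0$, $2\nmid m$, and $\beta=c^{\ell/2}$ for some $c\in\mathbb{Q}$ with $\sqrt{c}\in\mathbb{Q}(\zeta_{m\ell})$; (v) $\ell\equiv 4\pmod{8}$, $\beta<0$, $2\nmid m$, and $\beta=-(2c)^{\ell/2}$ for some $c\in\mathbb{Q}$ with $\sqrt{c}\in\mathbb{Q}(\zeta_{m\ell})$.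
   Context: $\zeta_n$ denotes a primitive $n$th root of unity in $\mathbb{C}$. *)

From mathcomp Require Import all_boot all_order all_algebra all_field.
Set Implicit Arguments. Unset Strict Implicit. Unset Printing Implicit Defensive.
Import Order.TTheory GRing.Theory Num.Theory.
Local Open Scope ring_scope.

(* Elements of algC (algebraic complex numbers) lying in the cyclotomic field
   Q(zeta_n): x = p(z) for some rational polynomial p, where z is a primitive
   n-th root of unity (all primitive n-th roots generate the same field, and
   Q(z) = Q[z] since z is algebraic). *)
Definition in_cyclo (n : nat) (x : algC) : Prop :=
  exists z : algC, n.-primitive_root z /\
    exists p : {poly rat}, x = (map_poly (@ratr algC) p).[z].

Definition sqrt_in_cyclo (n : nat) (c : rat) : Prop :=
  exists s : algC, s ^+ 2 = ratr c /\ in_cyclo n s.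

From mathcomp Require Import all_boot all_order all_algebra all_field.
From mathcomp Require Import zify ring.
Set Implicit Arguments. Unset Strict Implicit. Unset Printing Implicit Defensive.
Import Order.TTheory GRing.Theory Num.Theory.
Local Open Scope ring_scope.

(* Let z be a primitive (m l)-th root of unity, w = z^m, and g in Q(z) with
   g^l = beta.  Every automorphism u of algC maps g to w^j g for some j, and
   complex conjugation maps it to w^a g.  As the Galois group of Q(z) is
   abelian, u commutes with conjugation, which forces u(w)^a w^(2j) = w^a.
   Hence whenever mu in Q(z) satisfies mu^2 = k w^a with k rational, (g mu)^2
   is fixed by every automorphism and is therefore rational.  Taking for mu a
   power of w, a power of a square root of w (when m is even), or w^h (1 - i)
   with i^2 = -1, according to the parities of l, m and a, gives some d in
   Q(z) with d^2 rational and d^l equal to beta, -beta or -2^(l/2) beta; this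
   yields the listed cases, and the automorphism z -> -z excludes 8 | l in
   the last one. *)

Local Notation pQtoC := (map_poly (@ratr algC)).

Lemma prim_root_half (R : idomainType) n (x : R) :
  n.-primitive_root x -> ~~ odd n -> x ^+ (n %/ 2) = -1.
Proof.
move=> prim_x n_even; have n_gt0 := prim_order_gt0 prim_x.
have : (x ^+ (n %/ 2)) ^+ 2 == 1 by rewrite -exprM divnK ?dvdn2 ?prim_expr_order.
rewrite sqrf_eq1 -(prim_order_dvd prim_x) => /orP[/dvdn_leq | /eqP //]; lia.
Qed.

Lemma prim_root_dvd_half (R : idomainType) n d (x : R) :
  n.-primitive_root x -> (2 * d %| n)%N -> (x ^+ (n %/ (2 * d))) ^+ d = -1.
Proof.
move=> prim_x dvd_n; have := prim_root_half (dvdn_prim_root prim_x dvd_n).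
by rewrite mulKn // oddM; apply.
Qed.

Lemma prim_root_mul_half (R : idomainType) m l (x : R) :
  (m * l).-primitive_root x -> (2 %| m)%N -> (x ^+ (m %/ 2)) ^+ l = -1.
Proof.
move=> prim_x m_even; have := prim_order_gt0 prim_x; rewrite muln_gt0 => /andP[_ l_gt0].
by rewrite -(divnMr l_gt0) prim_root_dvd_half // dvdn_mul.
Qed.

Lemma conj_unity_root n (x : algC) : (0 < n)%N -> x ^+ n = 1 -> x^* * x = 1.
Proof.
move=> n_gt0 xn1; rewrite -normCKC.
have /eqP : `|x| ^+ n = 1 by rewrite -normrX xn1 normr1.
by rewrite pexpr_eq1 // => /eqP->; rewrite expr1n.
Qed.

Lemma oppr_even_expr_lt0 (R : realDomainType) n (x : R) :
  ~~ odd n -> - x ^+ n != 0 -> - x ^+ n < 0.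
Proof. by move=> n_even; rewrite oppr_lt0 oppr_eq0 lt0r exprn_even_ge0 ?andbT. Qed.

Definition in_Qz (z x : algC) : Prop := exists p : {poly rat}, x = (pQtoC p).[z].

Section AdjoinRoot.

Variable z : algC.

Lemma in_Qz_rat c : in_Qz z (ratr c).
Proof. by exists c%:P; rewrite map_polyC hornerC. Qed.

Lemma in_Qz1 : in_Qz z 1.
Proof. by rewrite -(rmorph1 (@ratr algC)); apply: in_Qz_rat. Qed.

Lemma in_Qz_gen : in_Qz z z.
Proof. by exists 'X; rewrite map_polyX hornerX. Qed.

Lemma in_QzD x y : in_Qz z x -> in_Qz z y -> in_Qz z (x + y).
Proof. by move=> [p ->] [q ->]; exists (p + q); rewrite rmorphD hornerD. Qed.

Lemma in_QzN x : in_Qz z x -> in_Qz z (- x).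
Proof. by move=> [p ->]; exists (- p); rewrite rmorphN hornerN. Qed.

Lemma in_QzM x y : in_Qz z x -> in_Qz z y -> in_Qz z (x * y).
Proof. by move=> [p ->] [q ->]; exists (p * q); rewrite rmorphM hornerM. Qed.

Lemma in_QzX x n : in_Qz z x -> in_Qz z (x ^+ n).
Proof.
move=> Qz_x; elim: n => [|n IHn]; first by rewrite expr0; apply: in_Qz1.
by rewrite exprS; apply: in_QzM.
Qed.

Lemma in_Qz_gen_exp n : in_Qz z (z ^+ n).
Proof. exact/in_QzX/in_Qz_gen. Qed.

End AdjoinRoot.

Lemma aut_hornerQ (u : {rmorphism algC -> algC}) p y :
  u (pQtoC p).[y] = (pQtoC p).[u y].
Proof.
rewrite -horner_map -map_poly_comp; congr (_.[_]).
by apply: eq_map_poly => b /=; rewrite fmorph_rat.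
Qed.

Section PrimitiveRoot.

Variables (N : nat) (z : algC).
Hypothesis prim_z : N.-primitive_root z.

Lemma in_Qz_aut_comm (u v : {rmorphism algC -> algC}) x :
  in_Qz z x -> u (v x) = v (u x).
Proof.
case=> p ->; rewrite !aut_hornerQ.
by rewrite (aut_unity_rootC u v (prim_order_gt0 prim_z) (prim_expr_order prim_z)).
Qed.

(* Reduce x = p(z) modulo the cyclotomic polynomial: the remainder r has
   degree < totient N and r - x takes the value 0 at all totient N
   conjugates of z, so it vanishes and x is its constant coefficient. *)
Lemma in_Qz_aut_fixed_Crat x :
  in_Qz z x -> (forall u : {rmorphism algC -> algC}, u x = x) -> x \in Crat.
Proof.
case=> p ->{x}; set x := (pQtoC p).[z] => fix_x.
have [q [Dq mon_q] _] := minCpolyP z; rewrite (minCpoly_cyclotomic prim_z) in Dq.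
set r := pQtoC (p %% q).
have x_mod : x = r.[z].
  rewrite /x {1}(divp_eq p q) rmorphD rmorphM /= hornerD hornerM -Dq.
  have /rootP-> : root (cyclotomic z N) z by rewrite root_cyclotomic.
  by rewrite mulr0 add0r.
pose rs := [seq z ^+ val k | k <- [seq k : 'I_N <- index_enum 'I_N | coprime k N]].
have Drs : cyclotomic z N = \prod_(y <- rs) ('X - y%:P).
  by rewrite /cyclotomic big_map big_filter.
have rs_roots : all (root (r - x%:P)) rs.
  apply/allP => y /mapP[k]; rewrite mem_filter => /andP[k_coprime _] ->{y}.
  have [u Du] := Qn_aut_exists k_coprime.
  by rewrite rootE !hornerE -Du ?prim_expr_order // -aut_hornerQ -x_mod fix_x subrr.
have rs_uniq : uniq rs.
  rewrite map_inj_in_uniq ?filter_uniq ?index_enum_uniq // => i j _ _ /eqP.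
  by rewrite (eq_prim_root_expr prim_z) !modn_small ?ltn_ord // => /eqP/val_inj.
have size_q : size q = (size rs).+1.
  by rewrite -(size_map_poly (@ratr algC)) -Dq Drs size_prod_XsubC.
have rs_gt0 : (0 < size rs)%N.
  have := size_cyclotomic z N; rewrite Drs size_prod_XsubC => -[->].
  by rewrite totient_gt0 (prim_order_gt0 prim_z).
have r_const : r = x%:P.
  apply/eqP; rewrite -subr_eq0; apply/eqP/(roots_geq_poly_eq0 rs_roots rs_uniq).
  rewrite (leq_trans (size_polyD _ _)) // size_polyN size_polyC geq_max.
  rewrite size_map_poly -ltnS -size_q ltn_modpN0 ?monic_neq0 //.
  by case: (x != 0).
by apply/CratP; exists (p %% q)`_0; rewrite -coef_map -/r r_const coefC.
Qed.

End PrimitiveRoot.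

Lemma aut_kummer_root l (w g : algC) (u : {rmorphism algC -> algC}) :
  l.-primitive_root w -> g ^+ l \in Crat -> g != 0 -> exists j, u g = w ^+ j * g.
Proof.
move=> prim_w /CratP[b gl] g_neq0.
have : (u g / g) ^+ l = 1.
  by rewrite expr_div_n -rmorphXn gl fmorph_rat -gl divff // expf_neq0.
by case/(prim_rootP prim_w) => j Dj; exists j; rewrite -Dj divfK.
Qed.

Definition cyclo_root_cases (m l : nat) (beta : rat) : Prop :=
  (odd l /\ exists c : rat, beta = c ^+ l) \/
      (~~ odd l /\ 0 < beta /\
         exists c : rat, beta = c ^+ (l %/ 2) /\ sqrt_in_cyclo (m * l) c) \/
      (~~ odd l /\ beta < 0 /\ (2 %| m)%N /\
         exists c : rat, beta = - c ^+ (l %/ 2) /\ sqrt_in_cyclo (m * l) c) \/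
      ((l %% 4 = 2)%N /\ beta < 0 /\ ~~ (2 %| m)%N /\
         (exists c : rat, beta = c ^+ (l %/ 2) /\ sqrt_in_cyclo (m * l) c)) \/
      ((l %% 8 = 4)%N /\ beta < 0 /\ ~~ (2 %| m)%N /\
         (exists c : rat, beta = - (2 * c) ^+ (l %/ 2) /\ sqrt_in_cyclo (m * l) c)).

Lemma sqrt_in_cyclo_opp N c : (4 %| N)%N -> sqrt_in_cyclo N c -> sqrt_in_cyclo N (- c).
Proof.
move=> N4 [s [s2 [z [prim_z Qz_s]]]].
exists (z ^+ (N %/ (2 * 2)) * s); split; last first.
  by exists z; split => //; apply/in_QzM/Qz_s/in_Qz_gen_exp.
by rewrite exprMn prim_root_dvd_half // s2 mulN1r rmorphN.
Qed.

Lemma cases_of_even_pow m l beta c : ~~ odd l -> beta != 0 ->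
  beta = c ^+ (l %/ 2) -> sqrt_in_cyclo (m * l) c -> cyclo_root_cases m l beta.
Proof.
move=> l_even beta_neq0 Dbeta sqrt_c.
have [beta_lt0 | beta_gt0 | /eqP] := ltgtP beta 0; last by rewrite (negPf beta_neq0).
- have half_odd : odd (l %/ 2).
    by apply: contraLR beta_lt0 => half_even; rewrite -leNgt Dbeta exprn_even_ge0.
  have [m_even | m_odd] := boolP (2 %| m)%N.
    do 2 right; left; do 3 split => //; exists (- c); split.
      by rewrite exprNn -signr_odd half_odd mulN1r opprK.
    by apply: sqrt_in_cyclo_opp => //; rewrite (_ : 4 = 2 * 2)%N // dvdn_mul // dvdn2.
  do 3 right; left; split; first lia.
  by do 2 split => //; exists c.
- by right; left; do 2 split => //; exists c.
Qed.

Lemma cases_of_sqr_Crat m l beta z d : (m * l).-primitive_root z -> beta != 0 ->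
  in_Qz z d -> d ^+ l = ratr beta -> d ^+ 2 \in Crat -> cyclo_root_cases m l beta.
Proof.
move=> prim_z beta_neq0 Qz_d d_l /CratP[c d2].
have [l_odd | l_even] := boolP (odd l).
  have l_gt0 : (0 < l)%N by lia.
  have d_neq0 : d != 0.
    apply: contraNneq beta_neq0 => d0; move: d_l; rewrite d0 expr0n eqn0Ngt l_gt0.
    by move=> /esym/eqP; rewrite fmorph_eq0.
  have d_rat : d = ratr (beta / c ^+ (l.-1 %/ 2)).
    rewrite fmorph_div rmorphXn /= -d2 -exprM -d_l.
    rewrite (_ : 2 * (l.-1 %/ 2) = l.-1)%N; last by lia.
    by rewrite -{1}(prednK l_gt0) exprS mulfK // expf_neq0.
  left; split => //; exists (beta / c ^+ (l.-1 %/ 2)).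
  by apply: (fmorph_inj (@ratr algC)); rewrite rmorphXn /= -d_rat.
apply: (cases_of_even_pow (c := c) l_even beta_neq0).
  apply: (fmorph_inj (@ratr algC)); rewrite rmorphXn /= -d2 -exprM -d_l.
  by rewrite mulnC divnK ?dvdn2.
by exists d; split => //; exists z.
Qed.

Section Forward.

Variables (m l : nat) (beta : rat) (z g : algC).
Hypothesis prim_z : (m * l).-primitive_root z.
Hypotheses (beta_neq0 : beta != 0) (Qz_g : in_Qz z g) (g_l : g ^+ l = ratr beta).

Local Notation w := (z ^+ m).

Let l_gt0 : (0 < l)%N.
Proof. by have := prim_order_gt0 prim_z; rewrite muln_gt0 => /andP[]. Qed.

Let prim_w : l.-primitive_root w.
Proof. by have := dvdn_prim_root prim_z (dvdn_mull m (dvdnn l)); rewrite mulnK. Qed.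

Let g_neq0 : g != 0.
Proof.
apply: contraNneq beta_neq0 => g0; move: g_l; rewrite g0 expr0n eqn0Ngt l_gt0.
by move=> /esym/eqP; rewrite fmorph_eq0.
Qed.

Let aut_g (u : {rmorphism algC -> algC}) : exists j, u g = w ^+ j * g.
Proof. by apply: aut_kummer_root prim_w _ g_neq0; rewrite g_l Crat_rat. Qed.

Section Twist.

Variable a : nat.
Hypothesis conj_g : g^* = w ^+ a * g.

(* u commutes with complex conjugation on Q(z), and w^* = w^-1. *)
Lemma aut_w_twist (u : {rmorphism algC -> algC}) j :
  u g = w ^+ j * g -> u w ^+ a * w ^+ (2 * j) = w ^+ a.
Proof.
move=> ug; apply: (mulIf g_neq0).
have comm := in_Qz_aut_comm prim_z u Num.conj Qz_g.
rewrite /= conj_g ug !rmorphM (rmorphXn u a) (rmorphXn Num.conj j) /= ug conj_g in comm.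
transitivity (u w ^+ a * (w ^+ j * g) * w ^+ j).
  by rewrite mul2n -addnn exprD; ring.
rewrite comm mulrAC -exprMn (conj_unity_root l_gt0 (prim_expr_order prim_w)).
by rewrite expr1n mul1r.
Qed.

Lemma twisted_sqr_Crat mu kappa :
  in_Qz z mu -> mu ^+ 2 = w ^+ a * ratr kappa -> (g * mu) ^+ 2 \in Crat.
Proof.
move=> Qz_mu mu2; apply: (in_Qz_aut_fixed_Crat prim_z); first exact/in_QzX/in_QzM.
move=> u; have [j ug] := aut_g u.
rewrite rmorphXn rmorphM /= ug !exprMn -rmorphXn mu2 rmorphM rmorphXn fmorph_rat /=.
rewrite -[(w ^+ j) ^+ 2]exprM [(j * 2)%N]mulnC -(aut_w_twist ug).
ring.
Qed.

Lemma cases_of_w_power h kappa :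
  w ^+ (2 * h) = w ^+ a * ratr kappa -> cyclo_root_cases m l beta.
Proof.
move=> wh; apply: (cases_of_sqr_Crat (d := g * w ^+ h) prim_z beta_neq0).
- exact/in_QzM/in_QzX/in_Qz_gen_exp.
- by rewrite exprMn [(w ^+ h) ^+ l]exprAC (prim_expr_order prim_w) expr1n mulr1.
- apply: (twisted_sqr_Crat (kappa := kappa)); first exact/in_QzX/in_Qz_gen_exp.
  by rewrite -exprM mulnC.
Qed.

Lemma cases_of_odd_twist_m_even :
  odd a -> (4 %| l)%N -> (2 %| m)%N -> cyclo_root_cases m l beta.
Proof.
move=> a_odd l4 m_even; set xi := z ^+ (m %/ 2).
have xi_l : xi ^+ l = -1 by rewrite prim_root_mul_half.
have xi2 : xi ^+ 2 = w by rewrite -exprM divnK.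
have d_l : (g * xi ^+ a) ^+ l = - ratr beta.
  by rewrite exprMn exprAC xi_l -signr_odd a_odd mulrN1 g_l.
have /CratP[c d2] : (g * xi ^+ a) ^+ 2 \in Crat.
  apply: (twisted_sqr_Crat (kappa := 1)); first exact/in_QzX/in_Qz_gen_exp.
  by rewrite rmorph1 mulr1 exprAC xi2.
have Dbeta : beta = - c ^+ (l %/ 2).
  apply: (fmorph_inj (@ratr algC)); rewrite rmorphN rmorphXn /= -d2 -exprM.
  by rewrite [(2 * _)%N]mulnC divnK ?d_l ?opprK // (dvdn_trans _ l4).
do 2 right; left; split; first lia.
split; first by rewrite Dbeta oppr_even_expr_lt0 -?Dbeta //; lia.
split => //; exists c; split => //.
exists (g * xi ^+ a); split => //.
by exists z; split => //; apply/in_QzM/in_QzX/in_Qz_gen_exp.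
Qed.

(* The automorphism z -> -z is an involution acting on w by -1; comparing
   its action on g twice with the twist relation forces 2 j = l / 2 (mod l)
   with j odd, which is impossible when 8 | l. *)
Lemma twist_not_8_dvd : odd a -> odd m -> ~~ (8 %| l)%N.
Proof.
move=> a_odd m_odd; apply/negP => l8.
have l_even : ~~ odd l by lia.
set K := ((m * l) %/ 2)%N.
have zK : z ^+ K = -1 by apply: prim_root_half => //; lia.
have K_coprime : coprime K.+1 (m * l).
  have -> : (m * l = K * 2)%N by rewrite /K; lia.
  by rewrite coprimeMr coprimeSn coprimen2 /= /K; lia.
have [u Du] := Qn_aut_exists K_coprime.
have uz : u z = - z by rewrite Du ?(prim_expr_order prim_z) // exprS zK mulrN1.
have uw : u w = - w by rewrite rmorphXn uz exprNn -signr_odd m_odd mulN1r.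
have w_neq0 : w != 0 by rewrite (prim_root_eq0 prim_w) -lt0n.
have [j ug] := aut_g u.
have w2j : w ^+ (2 * j) = -1.
  have := aut_w_twist ug; rewrite uw exprNn -signr_odd a_odd mulN1r mulNr.
  move=> /eqP; rewrite eqr_oppLR => /eqP tw.
  by apply: (mulfI (expf_neq0 a w_neq0)); rewrite tw mulrN1.
have j_odd : odd j.
  have uug : u (u g) = g.
    by case: Qz_g => p Dg; rewrite Dg !aut_hornerQ uz rmorphN uz opprK.
  have : (-1) ^+ j * w ^+ (2 * j) * g = 1 * g.
    rewrite mul1r -{2}uug ug rmorphM (rmorphXn u j) uw ug (exprNn w) mul2n -addnn exprD.
    by rewrite !mulrA.
  move=> /(mulIf g_neq0); rewrite w2j mulrN1 => /eqP; rewrite eqr_oppLR => /eqP sj.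
  move: sj; rewrite -signr_odd; case: (odd j) => //; rewrite expr0 => /eqP.
  by rewrite eq_sym lt_eqF // (lt_trans (@ltrN10 algC) ltr01).
have := prim_root_half prim_w l_even; rewrite -w2j => /eqP.
rewrite (eq_prim_root_expr prim_w) => /eqP/(congr1 (modn^~ 4)).
rewrite /= !modn_dvdm ?(dvdn_trans _ l8) //; lia.
Qed.

(* With i = w^(l/4) a square root of -1, (w^h (1 - i))^2 = w^(2h) (-2 i) = 2 w^a
   as soon as 2h = a + l/4. *)
Lemma twist_mul2_sqr : odd a -> (l %% 8 = 4)%N ->
  exists2 mu, in_Qz z mu & mu ^+ 2 = w ^+ a * ratr 2.
Proof.
move=> a_odd l8; set t := (l %/ 4)%N; set i := w ^+ t.
have i2 : i ^+ 2 = -1.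
  by rewrite -exprM (_ : t * 2 = l %/ 2)%N ?(prim_root_half prim_w) /t //; lia.
exists (w ^+ ((a + t) %/ 2) * (1 - i)).
  apply: in_QzM; first exact/in_QzX/in_Qz_gen_exp.
  by apply: in_QzD; [exact: in_Qz1 | exact/in_QzN/in_QzX/in_Qz_gen_exp].
rewrite exprMn -[(w ^+ _) ^+ 2]exprM divnK; last by rewrite dvdn2 /t; lia.
rewrite exprD -/i -mulrA rmorph_nat; congr (_ * _).
have -> : i * (1 - i) ^+ 2 = i * (1 + i ^+ 2) - 2 * i ^+ 2 by ring.
by rewrite i2; ring.
Qed.

Lemma cases_of_odd_twist_m_odd :
  odd a -> (4 %| l)%N -> odd m -> cyclo_root_cases m l beta.
Proof.
move=> a_odd l4 m_odd.
have l8 : (l %% 8 = 4)%N by have := twist_not_8_dvd a_odd m_odd; lia.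
have [mu Qz_mu mu2] := twist_mul2_sqr a_odd l8.
have /CratP[c d2] := twisted_sqr_Crat Qz_mu mu2.
have d_l : (g * mu) ^+ l = - 2 ^+ (l %/ 2) * ratr beta.
  rewrite exprMn g_l mulrC -[in LHS](divnK (dvdn_trans _ l4 : 2 %| l)%N) //.
  rewrite mulnC exprM mu2 exprMn rmorph_nat [(w ^+ a) ^+ _]exprAC.
  rewrite (prim_root_half prim_w); last lia.
  by rewrite -signr_odd a_odd expr1 mulN1r.
have Dbeta : beta = - (2 * (c / 4)) ^+ (l %/ 2).
  apply: (fmorph_inj (@ratr algC)).
  rewrite rmorphN rmorphXn rmorphM fmorph_div !rmorph_nat /= -d2.
  rewrite (_ : 2 * ((g * mu) ^+ 2 / 4) = (g * mu) ^+ 2 / 2); last by field.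
  rewrite expr_div_n -exprM mulnC divnK ?(dvdn_trans _ l4) // d_l.
  by field; rewrite expf_neq0 // pnatr_eq0.
do 4 right; split => //; split.
  by rewrite Dbeta oppr_even_expr_lt0 -?Dbeta //; lia.
split; first lia.
exists (c / 4); split => //; exists (g * mu * ratr 2^-1); split.
  by rewrite exprMn d2 -rmorphXn -rmorphM; congr ratr; field.
exists z; split => //; apply/in_QzM/in_Qz_rat/in_QzM => //.
Qed.

Lemma cases_of_twist : cyclo_root_cases m l beta.
Proof.
have [l_odd | l_even] := boolP (odd l).
  apply: (@cases_of_w_power ((a * l.+1) %/ 2) 1); rewrite rmorph1 mulr1.
  rewrite mulnC divnK; last by rewrite dvdn2; lia.
  by rewrite mulnS exprD mulnC exprM (prim_expr_order prim_w) expr1n mulr1.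
have [a_odd | a_even] := boolP (odd a); last first.
  by apply: (@cases_of_w_power (a %/ 2) 1); rewrite rmorph1 mulr1 mulnC divnK // dvdn2.
have [l_mod4 | l_not_mod4] := boolP (l %% 4 == 2)%N.
  apply: (@cases_of_w_power ((a + l %/ 2) %/ 2) (-1)); rewrite rmorphN rmorph1 mulrN1.
  rewrite mulnC divnK; last by rewrite dvdn2; lia.
  by rewrite exprD (prim_root_half prim_w) // mulrN1.
have l4 : (4 %| l)%N by lia.
have [m_even | m_odd] := boolP (2 %| m)%N.
  exact: cases_of_odd_twist_m_even.
by apply: cases_of_odd_twist_m_odd => //; lia.
Qed.

End Twist.

Lemma cases_of_cyclo_root : cyclo_root_cases m l beta.
Proof. by have [a conj_g] := aut_g Num.conj; apply: (cases_of_twist conj_g). Qed.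

End Forward.

Lemma expr_sqrt_half l (s : algC) c :
  ~~ odd l -> s ^+ 2 = ratr c -> s ^+ l = ratr (c ^+ (l %/ 2)).
Proof.
by move=> l_even s2; rewrite -[in LHS](@divnK 2 l) ?dvdn2 // mulnC exprM s2 rmorphXn.
Qed.

(* (s (1 + i))^2 = 2 c i, and i^(l/2) = -1 since l/2 = 2 (l/4) with l/4 odd. *)
Lemma expr_mul1Di l (s i : algC) c : (l %% 8 = 4)%N ->
  i ^+ 2 = -1 -> s ^+ 2 = ratr c -> (s * (1 + i)) ^+ l = ratr (- (2 * c) ^+ (l %/ 2)).
Proof.
move=> l8 i2 s2.
have gamma2 : (s * (1 + i)) ^+ 2 = ratr (2 * c) * i.
  rewrite rmorphM rmorph_nat exprMn s2.
  have -> : (1 + i) ^+ 2 = 1 + i ^+ 2 + 2 * i by ring.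
  by rewrite i2; ring.
have -> : l = (2 * (2 * (l %/ 4)))%N by lia.
rewrite exprM gamma2 mulKn // exprMn [i ^+ _]exprM i2 -signr_odd.
have -> : odd (l %/ 4) by lia.
by rewrite expr1 mulrN1 -rmorphXn rmorphN.
Qed.

Lemma cyclo_root_of_cases m l beta : (0 < m)%N -> (0 < l)%N ->
  cyclo_root_cases m l beta ->
  exists gamma : algC, in_cyclo (m * l) gamma /\ gamma ^+ l = ratr beta.
Proof.
move=> m_gt0 l_gt0.
case=> [[l_odd [c ->]] | [[l_even [_ [c [-> [s [s2 [z [prim_z Qz_s]]]]]]]] |
       [[l_even [_ [m_even [c [-> [s [s2 [z [prim_z Qz_s]]]]]]]]] |
       [[l_mod4 [_ [_ [c [-> [s [s2 [z [prim_z Qz_s]]]]]]]]] |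
        [l_mod8 [_ [_ [c [-> [s [s2 [z [prim_z Qz_s]]]]]]]]]]]]].
- have [z prim_z] : {z : algC | (m * l).-primitive_root z}.
    by apply: C_prim_root_exists; rewrite muln_gt0 m_gt0.
  exists (ratr c); rewrite rmorphXn; split => //.
  by exists z; split => //; apply: in_Qz_rat.
- by exists s; split; [exists z | apply: expr_sqrt_half].
- exists (s * z ^+ (m %/ 2)); split.
    by exists z; split => //; apply/in_QzM/in_Qz_gen_exp.
  by rewrite exprMn prim_root_mul_half // mulrN1 (expr_sqrt_half l_even s2) rmorphN.
- by exists s; split; [exists z | apply: expr_sqrt_half => //; lia].
- set i := z ^+ ((m * l) %/ (2 * 2)).
  have i2 : i ^+ 2 = -1 by rewrite prim_root_dvd_half // dvdn_mull //; lia.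
  exists (s * (1 + i)); split; last exact: expr_mul1Di.
  by exists z; split => //; apply/in_QzM/in_QzD/in_Qz_gen_exp/in_Qz1.
Qed.

Theorem lemma3p1 (m l : nat) (beta : rat) :
  (0 < m)%N -> (0 < l)%N -> beta != 0 ->
  (exists gamma : algC, in_cyclo (m * l) gamma /\ gamma ^+ l = ratr beta) <->
  (odd l /\ exists c : rat, beta = c ^+ l) \/
      (~~ odd l /\ 0 < beta /\
         exists c : rat, beta = c ^+ (l %/ 2) /\ sqrt_in_cyclo (m * l) c) \/
      (~~ odd l /\ beta < 0 /\ (2 %| m)%N /\
         exists c : rat, beta = - c ^+ (l %/ 2) /\ sqrt_in_cyclo (m * l) c) \/
      ((l %% 4 = 2)%N /\ beta < 0 /\ ~~ (2 %| m)%N /\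
         (exists c : rat, beta = c ^+ (l %/ 2) /\ sqrt_in_cyclo (m * l) c)) \/
      ((l %% 8 = 4)%N /\ beta < 0 /\ ~~ (2 %| m)%N /\
         (exists c : rat, beta = - (2 * c) ^+ (l %/ 2) /\ sqrt_in_cyclo (m * l) c)).
Proof.
move=> m_gt0 l_gt0 beta_neq0; split; last exact: cyclo_root_of_cases.
case=> gamma [[z [prim_z Qz_gamma]] gamma_l].
exact: (cases_of_cyclo_root prim_z beta_neq0 Qz_gamma gamma_l).
Qed.
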